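(* Let $G$ be a game and let $H$ be the game obtained from $G$ by removing a dominated option (a Left option $G^{L_1}$ for which some other Left option $G^{L_2}$ satisfies $G^{L_1}\le G^{L_2}$, or a Right option $G^{R_1}$ for which some other Right option $G^{R_2}$ satisfies $G^{R_2}\le G^{R_1}$). Then $G \triangleq H$.
   Context: Games are short (finite) normal-play combinatorial games between players Left and Right, written $G\cong\{L(G)\mid R(G)\}$, where $\cong$ denotes identity of literal forms (game trees) and $L(G),R(G)$ are the sets of Left and Right options. The disjunctive sum is $G+H\cong\{L(G)+H,\,G+L(H)\mid R(G)+H,\,G+R(H)\}$, negation is $-G\cong\{-R(G)\mid -L(G)\}$, and $G-H$ means $G+(-H)$; $\le$ and $=$ are the usual partial order and equality of game values ($G\le H$ iff Left wins $H-G$ when Right moves first). Equivalence modulo domination: $G\triangleq H$ means that in $G+(-H)$, for every move by either player (as first player) in one of the two summands, the other player has a response in the other summand after which the responding player wins (with the first player to move next). *)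

From Stdlib Require Import List Arith.
Import ListNotations.

Inductive game : Type := Game : list game -> list game -> game.

Definition lopts (G : game) : list game := match G with Game l _ => l end.
Definition ropts (G : game) : list game := match G with Game _ r => r end.

Fixpoint neg (G : game) : game :=
  match G with Game l r => Game (map neg r) (map neg l) end.

Fixpoint add (G H : game) : game :=
  match G with
  | Game gl gr =>
      let fix addH (H : game) : game :=
        match H with
        | Game hl hr =>
            Game (map (fun g => add g H) gl ++ map addH hl)
                 (map (fun g => add g H) gr ++ map addH hr)
        end in addH H
  end.

(* Normal play: lwin true X  = Left wins X moving first;
                lwin false X = Left wins X when Right moves first. *)
Fixpoint lwin (first : bool) (X : game) : Prop :=
  match X with
  | Game l r =>
      if first then
        (fix ex (s : list game) : Prop :=
           match s with [] => False | x :: s' => lwin false x \/ ex s' end) l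
      else
        (fix all (s : list game) : Prop :=
           match s with [] => True | x :: s' => lwin true x /\ all s' end) r
  end.

(* rwin true X = Right wins X moving first;
   rwin false X = Right wins X when Left moves first. *)
Fixpoint rwin (first : bool) (X : game) : Prop :=
  match X with
  | Game l r =>
      if first then
        (fix ex (s : list game) : Prop :=
           match s with [] => False | x :: s' => rwin false x \/ ex s' end) r
      else
        (fix all (s : list game) : Prop :=
           match s with [] => True | x :: s' => rwin true x /\ all s' end) l
  end.

Definition game_le (G H : game) : Prop := lwin false (add H (neg G)).

(* Equivalence modulo domination G ≜ H, read off the sum G + (-H):
   every move by either player in one summand has a reply by the other
   player in the other summand after which the replying player wins
   with the original mover to move next. *)
Definition dom_equiv (G H : game) : Prop :=
  (* Left moves in G to G^L + (-H); Right replies in -H *)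
  (forall GL, In GL (lopts G) ->
     exists Y, In Y (ropts (neg H)) /\ rwin false (add GL Y)) /\
  (* Left moves in -H to G + X; Right replies in G *)
  (forall X, In X (lopts (neg H)) ->
     exists GR, In GR (ropts G) /\ rwin false (add GR X)) /\
  (* Right moves in G to G^R + (-H); Left replies in -H *)
  (forall GR, In GR (ropts G) ->
     exists Y, In Y (lopts (neg H)) /\ lwin false (add GR Y)) /\
  (* Right moves in -H to G + X; Left replies in G *)
  (forall X, In X (ropts (neg H)) ->
     exists GL, In GL (lopts G) /\ lwin false (add GL X)).

Definition remove_at {A : Type} (i : nat) (l : list A) : list A :=
  firstn i l ++ skipn (S i) l.

Definition game0 : game := Game [] [].

(* Every move in G + (-H) is answered by the mirror move, leaving a position
   X - X, which the second player wins (Tweedledum-Tweedledee).  The only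
   move without a mirror image is Left's move to the deleted option G^L1;
   Right answers it with -G^L2, and G^L1 - G^L2 <= 0 says that Right wins
   the resulting position with Left to move (symmetrically for a deleted
   Right option). *)

From Stdlib Require Import List Arith Lia.
Import ListNotations.

Fixpoint game_nested_ind (P : game -> Prop)
  (IH : forall l r, (forall x, In x l -> P x) -> (forall x, In x r -> P x) ->
        P (Game l r))
  (g : game) {struct g} : P g :=
  let fix all_in (s : list game) : forall x, In x s -> P x :=
    match s with
    | [] => fun x Hx => False_ind (P x) Hx
    | a :: s' => fun x Hx =>
        match Hx with
        | or_introl e => eq_ind a P (game_nested_ind P IH a) x e
        | or_intror Hx' => all_in s' x Hx'
        end
    end in
  match g with Game l r => IH l r (all_in l) (all_in r) end.

Lemma lwin_true_iff X : lwin true X <-> exists x, In x (lopts X) /\ lwin false x.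
Proof.
  destruct X as [l r]; simpl.
  induction l as [|a l IH]; simpl; [firstorder|].
  rewrite IH; firstorder congruence.
Qed.

Lemma lwin_false_iff X : lwin false X <-> forall x, In x (ropts X) -> lwin true x.
Proof.
  destruct X as [l r]; simpl.
  induction r as [|a r IH]; simpl; [firstorder|].
  rewrite IH; firstorder congruence.
Qed.

Lemma rwin_true_iff X : rwin true X <-> exists x, In x (ropts X) /\ rwin false x.
Proof.
  destruct X as [l r]; simpl.
  induction r as [|a r IH]; simpl; [firstorder|].
  rewrite IH; firstorder congruence.
Qed.

Lemma rwin_false_iff X : rwin false X <-> forall x, In x (lopts X) -> rwin true x.
Proof.
  destruct X as [l r]; simpl.
  induction l as [|a l IH]; simpl; [firstorder|].
  rewrite IH; firstorder congruence.
Qed.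

Lemma add_Game A B :
  add A B =
  Game (map (fun a => add a B) (lopts A) ++ map (fun b => add A b) (lopts B))
       (map (fun a => add a B) (ropts A) ++ map (fun b => add A b) (ropts B)).
Proof. destruct A, B; reflexivity. Qed.

Lemma In_lopts_add A B z :
  In z (lopts (add A B)) <->
  (exists a, In a (lopts A) /\ z = add a B) \/
  (exists b, In b (lopts B) /\ z = add A b).
Proof. rewrite add_Game; simpl; rewrite in_app_iff, !in_map_iff; firstorder. Qed.

Lemma In_ropts_add A B z :
  In z (ropts (add A B)) <->
  (exists a, In a (ropts A) /\ z = add a B) \/
  (exists b, In b (ropts B) /\ z = add A b).
Proof. rewrite add_Game; simpl; rewrite in_app_iff, !in_map_iff; firstorder. Qed.

Lemma neg_involutive X : neg (neg X) = X.
Proof.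
  induction X as [l r IHl IHr] using game_nested_ind; simpl.
  rewrite !map_map; f_equal.
  - rewrite <- (map_id l) at 2; apply map_ext_in; exact IHl.
  - rewrite <- (map_id r) at 2; apply map_ext_in; exact IHr.
Qed.

Lemma neg_add A B : neg (add A B) = add (neg A) (neg B).
Proof.
  revert B; induction A as [al ar IHal IHar] using game_nested_ind; intro B.
  induction B as [bl br IHbl IHbr] using game_nested_ind.
  rewrite add_Game, (add_Game (neg _)); simpl.
  rewrite !map_app, !map_map.
  f_equal; f_equal; apply map_ext_in; intros x Hx; auto.
Qed.

Lemma rwin_neg_iff f X : rwin f (neg X) <-> lwin f X.
Proof.
  revert f; induction X as [l r IHl IHr] using game_nested_ind; intros [|].
  - rewrite rwin_true_iff, lwin_true_iff; simpl; split.
    + intros [x [Hx Hw]]; apply in_map_iff in Hx as [y [<- Hy]].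
      exists y; split; [exact Hy | apply IHl; auto].
    + intros [y [Hy Hw]]; exists (neg y).
      split; [apply in_map; exact Hy | apply IHl; auto].
  - rewrite rwin_false_iff, lwin_false_iff; simpl; split.
    + intros H y Hy; apply IHr, H, in_map; auto.
    + intros H x Hx; apply in_map_iff in Hx as [y [<- Hy]]; apply IHr; auto.
Qed.

Lemma lwin_add_comm f A B : lwin f (add A B) -> lwin f (add B A).
Proof.
  revert f B; induction A as [al ar IHal IHar] using game_nested_ind; intros f B.
  revert f; induction B as [bl br IHbl IHbr] using game_nested_ind; intros [|].
  - rewrite !lwin_true_iff; intros [z [Hz Hw]].
    apply In_lopts_add in Hz as [[a [Ha ->]] | [b [Hb ->]]].
    + exists (add (Game bl br) a); split; [apply In_lopts_add; eauto | auto].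
    + exists (add b (Game al ar)); split; [apply In_lopts_add; eauto | auto].
  - rewrite !lwin_false_iff; intros H z Hz.
    apply In_ropts_add in Hz as [[b [Hb ->]] | [a [Ha ->]]].
    + apply IHbr, H, In_ropts_add; eauto.
    + apply IHar, H, In_ropts_add; eauto.
Qed.

Lemma game_le_refl X : game_le X X.
Proof.
  unfold game_le.
  induction X as [l r IHl IHr] using game_nested_ind.
  apply lwin_false_iff; intros z Hz; apply lwin_true_iff.
  apply In_ropts_add in Hz as [[a [Ha ->]] | [b [Hb ->]]].
  - exists (add a (neg a)); split; [|auto].
    apply In_lopts_add; right; exists (neg a); split; [apply in_map |]; auto.
  - simpl in Hb; apply in_map_iff in Hb as [a [<- Ha]].
    exists (add a (neg a)); split; [apply In_lopts_add; left; eauto | auto].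
Qed.

Lemma rwin_of_game_le A B : game_le A B -> rwin false (add A (neg B)).
Proof.
  unfold game_le; intro Hle.
  rewrite <- (neg_involutive (add A (neg B))), rwin_neg_iff,
    neg_add, neg_involutive.
  apply lwin_add_comm; exact Hle.
Qed.

Lemma dom_equiv_of_dominated gl gr hl hr :
  incl hl gl -> incl hr gr ->
  (forall g, In g gl -> exists h, In h hl /\ game_le g h) ->
  (forall g, In g gr -> exists h, In h hr /\ game_le h g) ->
  dom_equiv (Game gl gr) (Game hl hr).
Proof.
  intros Hl Hr Hdl Hdr; repeat split; simpl.
  - intros g Hg; destruct (Hdl g Hg) as [h [Hh Hle]].
    exists (neg h); split; [apply in_map; exact Hh | apply rwin_of_game_le; exact Hle].
  - intros x Hx; apply in_map_iff in Hx as [h [<- Hh]].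
    exists h; split; [apply Hr; exact Hh | apply rwin_of_game_le, game_le_refl].
  - intros g Hg; destruct (Hdr g Hg) as [h [Hh Hle]].
    exists (neg h); split; [apply in_map; exact Hh | exact Hle].
  - intros x Hx; apply in_map_iff in Hx as [h [<- Hh]].
    exists h; split; [apply Hl; exact Hh | apply game_le_refl].
Qed.

Lemma incl_remove_at {A} i (l : list A) : incl (remove_at i l) l.
Proof.
  unfold remove_at; apply incl_app.
  - rewrite <- (firstn_skipn i l) at 2; apply incl_appl, incl_refl.
  - rewrite <- (firstn_skipn (S i) l) at 2; apply incl_appr, incl_refl.
Qed.

Lemma nth_In_remove_at {A} (l : list A) i j d :
  i < length l -> j < length l -> i <> j -> In (nth j l d) (remove_at i l).
Proof.
  unfold remove_at; revert i j.
  induction l as [|a l IH]; intros [|i] [|j] Hi Hj Hij; simpl in *; try lia.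
  - apply nth_In; lia.
  - auto.
  - right; apply IH; lia.
Qed.

Lemma remove_at_dominated {A} (R : A -> A -> Prop) (l : list A) i j d :
  (forall x, R x x) -> i < length l -> j < length l -> i <> j ->
  R (nth i l d) (nth j l d) ->
  forall x, In x l -> exists y, In y (remove_at i l) /\ R x y.
Proof.
  intros Hrefl Hi Hj Hij Hij_R x Hx.
  apply In_nth with (d := d) in Hx as [k [Hk <-]].
  destruct (Nat.eq_dec k i) as [-> | Hki].
  - exists (nth j l d); split; [apply nth_In_remove_at |]; auto.
  - exists (nth k l d); split; [apply nth_In_remove_at |]; auto.
Qed.

Theorem lemma2p1 :
  (* removing a dominated Left option *)
  (forall (gl gr : list game) (i j : nat),
     i < length gl -> j < length gl -> i <> j ->
     game_le (nth i gl game0) (nth j gl game0) ->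
     dom_equiv (Game gl gr) (Game (remove_at i gl) gr)) /\
  (* removing a dominated Right option *)
  (forall (gl gr : list game) (i j : nat),
     i < length gr -> j < length gr -> i <> j ->
     game_le (nth j gr game0) (nth i gr game0) ->
     dom_equiv (Game gl gr) (Game gl (remove_at i gr))).
Proof.
  split; intros gl gr i j Hi Hj Hij Hle.
  - apply dom_equiv_of_dominated.
    + apply incl_remove_at.
    + apply incl_refl.
    + exact (remove_at_dominated game_le gl i j game0 game_le_refl Hi Hj Hij Hle).
    + intros g Hg; exists g; split; [exact Hg | apply game_le_refl].
  - apply dom_equiv_of_dominated.
    + apply incl_refl.
    + apply incl_remove_at.
    + intros g Hg; exists g; split; [exact Hg | apply game_le_refl].
    + exact (remove_at_dominated (fun x y => game_le y x) gr i j game0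
               game_le_refl Hi Hj Hij Hle).
Qed.
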